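(* In the setting below, suppose $0<\eta\le\frac{1}{L(K+1)}$. Then for every $k\ge0$ the iterates of the PIAG method satisfy \[ -\|d_k\|^2\le -\frac{\mu}{4}F_{k+1}+\eta L\sum_{j=(k-K)_+}^{k-1}\|d_j\|^2 . \]
   Context: Let $m,n\ge 1$ be integers and $\|\cdot\|$ the Euclidean norm on $\mathbb{R}^n$. For $i=1,\dots,m$, let $f_i:\mathbb{R}^n\to\mathbb{R}$ be continuously differentiable with $\|\nabla f_i(x)-\nabla f_i(y)\|\le L_i\|x-y\|$ for all $x,y$, where $L_i\ge 0$ (the $f_i$ are not assumed convex). Let $f=\frac1m\sum_{i=1}^m f_i$ and $L=\frac1m\sum_{i=1}^m L_i$. Assume $f$ is $\mu$-strongly convex for some $\mu>0$ (i.e. $x\mapsto f(x)-\frac{\mu}{2}\|x\|^2$ is convex). Let $r:\mathbb{R}^n\to(-\infty,\infty]$ be proper, closed and convex, let $F=f+r$, and let $x^*$ be the unique minimizer of $F$. For $\eta>0$ define $\mathrm{prox}_r^\eta(y)=\arg\min_{x\in\mathbb{R}^n}\{\frac12\|x-y\|^2+\eta r(x)\}$. PIAG method: fix an integer $K\ge 0$, a step size $\eta>0$ and $x_0\in\mathbb{R}^n$; for each $k\ge0$ and each $i$ let $\tau_{i,k}$ be any (deterministically chosen) integer with $\max(k-K,0)\le\tau_{i,k}\le k$; set $g_k=\frac1m\sum_{i=1}^m\nabla f_i(x_{\tau_{i,k}})$ and $x_{k+1}=\mathrm{prox}_r^\eta(x_k-\eta g_k)$. Define $d_k=(x_{k+1}-x_k)/\eta$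 and $F_k=F(x_k)-F(x^* )$. Write $(t)_+=\max(t,0)$; empty sums are zero. *)

From HB Require Import structures.
From mathcomp Require Import all_boot all_order all_algebra.
From mathcomp Require Import all_classical all_reals all_analysis.

Set Implicit Arguments.
Unset Strict Implicit.
Unset Printing Implicit Defensive.

Import Order.TTheory GRing.Theory Num.Theory.
Import numFieldNormedType.Exports.
Local Open Scope ring_scope.
Local Open Scope classical_set_scope.

Definition dotv (R : realType) (n : nat) (u v : 'rV[R]_n) : R :=
  \sum_(j < n) u 0 j * v 0 j.

Definition norm2 (R : realType) (n : nat) (v : 'rV[R]_n) : R :=
  Num.sqrt (\sum_(j < n) (v 0 j) ^+ 2).

Definition has_gradient (R : realType) (n : nat)
    (g : 'rV[R]_n -> R) (gr : 'rV[R]_n -> 'rV[R]_n) : Prop :=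
  forall x : 'rV[R]_n, differentiable g x /\ forall v, 'd g x v = dotv (gr x) v.

Definition convex_fun (R : realType) (n : nat) (g : 'rV[R]_n -> R) : Prop :=
  forall (x y : 'rV[R]_n) (t : R), 0 <= t <= 1 ->
    g (t *: x + (1 - t) *: y) <= t * g x + (1 - t) * g y.

Definition strongly_convex (R : realType) (n : nat) (mu : R)
    (g : 'rV[R]_n -> R) : Prop :=
  convex_fun (fun x => g x - mu / 2 * norm2 x ^+ 2).

Definition proper_fun (R : realType) (n : nat) (r : 'rV[R]_n -> \bar R) : Prop :=
  (forall x, r x != -oo%E) /\ exists x, r x != +oo%E.

(* closed = lower semicontinuous = all sublevel sets closed *)
Definition closed_fun (R : realType) (n : nat) (r : 'rV[R]_n -> \bar R) : Prop :=
  forall a : R, closed [set x | (r x <= a%:E)%E].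

Definition convex_efun (R : realType) (n : nat) (r : 'rV[R]_n -> \bar R) : Prop :=
  forall (x y : 'rV[R]_n) (t : R), 0 <= t <= 1 ->
    (r (t *: x + (1 - t) *: y)%R <= t%:E * r x + (1 - t)%:E * r y)%E.

Definition is_minimizer (R : realType) (n : nat) (phi : 'rV[R]_n -> \bar R)
    (z : 'rV[R]_n) : Prop :=
  forall x, (phi z <= phi x)%E.

(* z = prox_r^eta(y) : z minimizes x |-> 1/2 ||x - y||^2 + eta r(x)
   (the minimizer is unique for proper closed convex r). *)
Definition is_prox (R : realType) (n : nat) (r : 'rV[R]_n -> \bar R) (eta : R)
    (y z : 'rV[R]_n) : Prop :=
  is_minimizer (fun x => ((1 / 2 * norm2 (x - y) ^+ 2)%:E + eta%:E * r x)%E) z.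

(* With y = x_k - eta g_k, the prox step makes eta^-1 (y - x_{k+1}) a subgradient
   of r at x_{k+1}, and strong convexity of f gives
   f x* >= f x_{k+1} + <grad f x_{k+1}, x* - x_{k+1}> + mu/2 |x* - x_{k+1}|^2.
   Adding the two and completing the square bounds F_{k+1} by |e|^2 / (2 mu) with
   e = grad f x_{k+1} - g_k - d_k.  The delay error grad f x_{k+1} - g_k is at most
   L times the length of the last K + 1 steps, so by Cauchy-Schwarz and
   eta L (K + 1) <= 1 its square is at most eta L sum_{j<k} |d_j|^2 + |d_k|^2;
   hence mu F_{k+1} <= 2 |d_k|^2 + eta L sum_{j<k} |d_j|^2.
   Both first-order inequalities come from one-sided limits along the segment
   [x_{k+1}, x*]. *)

From HB Require Import structures.
From mathcomp Require Import all_boot all_order all_algebra.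
From mathcomp Require Import all_classical all_reals all_analysis.
From mathcomp Require Import ring lra.
Import Order.TTheory GRing.Theory Num.Theory.
Import numFieldNormedType.Exports.

Set Implicit Arguments.
Unset Strict Implicit.
Unset Printing Implicit Defensive.

Local Open Scope ring_scope.
Local Open Scope classical_set_scope.

Section Euclidean.
Variables (R : realType) (n : nat).
Implicit Types (u v w : 'rV[R]_n) (a : R).

Lemma dotvC u v : dotv u v = dotv v u.
Proof. by apply: eq_bigr => j _; rewrite mulrC. Qed.

Lemma dotvDl u v w : dotv (u + v) w = dotv u w + dotv v w.
Proof. by rewrite /dotv -big_split; apply: eq_bigr => j _; rewrite mxE mulrDl. Qed.

Lemma dotvZl a u v : dotv (a *: u) v = a * dotv u v.
Proof. by rewrite /dotv mulr_sumr; apply: eq_bigr => j _; rewrite mxE mulrA. Qed.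

Lemma dotvBl u v w : dotv (u - v) w = dotv u w - dotv v w.
Proof. by rewrite -scaleN1r dotvDl dotvZl mulN1r. Qed.

Lemma dotvDr u v w : dotv u (v + w) = dotv u v + dotv u w.
Proof. by rewrite !(dotvC u) dotvDl. Qed.

Lemma dotvZr a u v : dotv u (a *: v) = a * dotv u v.
Proof. by rewrite !(dotvC u) dotvZl. Qed.

Lemma dotv0r u : dotv u 0 = 0.
Proof. by rewrite -(scale0r 0) dotvZr mul0r. Qed.

Lemma dotv_suml m (F : 'I_m -> 'rV[R]_n) v :
  dotv (\sum_(i < m) F i) v = \sum_(i < m) dotv (F i) v.
Proof.
elim/big_rec2: _ => [|i _ s _ <-]; last by rewrite dotvDl.
by rewrite dotvC dotv0r.
Qed.

Lemma sqr_norm2 v : norm2 v ^+ 2 = dotv v v.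
Proof.
rewrite sqr_sqrtr; last by rewrite sumr_ge0 // => j _; rewrite sqr_ge0.
by apply: eq_bigr => j _; rewrite expr2.
Qed.

Lemma norm2_ge0 v : 0 <= norm2 v.
Proof. exact: sqrtr_ge0. Qed.

Lemma norm2_0 : norm2 (0 : 'rV[R]_n) = 0.
Proof. by rewrite /norm2 big1 ?sqrtr0 // => j _; rewrite mxE expr0n. Qed.

Lemma norm2_eq0 v : (norm2 v == 0) = (v == 0).
Proof.
apply/eqP/eqP => [|->]; last exact: norm2_0.
move/eqP; rewrite sqrtr_eq0 => s0.
have /psumr_eq0P v0 : \sum_(j < n) v 0 j ^+ 2 = 0.
  by apply/eqP; rewrite eq_le s0 sumr_ge0 // => j _; rewrite sqr_ge0.
by apply/rowP => j; apply/eqP; rewrite mxE -sqrf_eq0 v0 // => i _; rewrite sqr_ge0.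
Qed.

Lemma sqr_norm2DZ u v a :
  norm2 (u + a *: v) ^+ 2 = norm2 u ^+ 2 + 2 * a * dotv u v + a ^+ 2 * norm2 v ^+ 2.
Proof. by rewrite !sqr_norm2 !(dotvDl, dotvDr, dotvZl, dotvZr) (dotvC v u); ring. Qed.

Lemma norm2Z a v : norm2 (a *: v) = `|a| * norm2 v.
Proof.
rewrite /norm2 (eq_bigr (fun j => a ^+ 2 * v 0 j ^+ 2)) => [|j _]; last first.
  by rewrite mxE exprMn.
by rewrite -mulr_sumr sqrtrM ?sqr_ge0 // sqrtr_sqr.
Qed.

Lemma dotv_le_norm2 u v : dotv u v <= norm2 u * norm2 v.
Proof.
have [->|v0] := eqVneq v 0; first by rewrite dotv0r mulr_ge0 ?norm2_ge0.
have nv : 0 < norm2 v by rewrite lt_def norm2_eq0 v0 norm2_ge0.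
(* t minimises norm2 (u - t *: v). *)
set c := dotv u v; set t := c / norm2 v ^+ 2.
have ct : c = t * norm2 v ^+ 2 by rewrite divfK // sqrf_eq0 gt_eqF.
have tb : t ^+ 2 * norm2 v ^+ 2 <= norm2 u ^+ 2.
  by have := sqr_ge0 (norm2 (u - t *: v)); rewrite -scaleNr sqr_norm2DZ -/c ct; lra.
have c2 : c ^+ 2 <= (norm2 u * norm2 v) ^+ 2.
  by have := ler_wpM2r (sqr_ge0 (norm2 v)) tb; rewrite ct !exprMn; lra.
have := mulr_ge0 (norm2_ge0 u) (norm2_ge0 v).
nra.
Qed.

Lemma norm2D u v : norm2 (u + v) <= norm2 u + norm2 v.
Proof.
rewrite -ler_sqr ?nnegrE ?addr_ge0 ?norm2_ge0 //.
have := sqr_norm2DZ u v 1; rewrite scale1r => ->.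
by have := dotv_le_norm2 u v; rewrite sqrrD mulr2n; lra.
Qed.

Lemma norm2_sum (I : Type) (s : seq I) (P : pred I) (F : I -> 'rV[R]_n) :
  norm2 (\sum_(i <- s | P i) F i) <= \sum_(i <- s | P i) norm2 (F i).
Proof.
elim/big_rec2: _ => [|i y1 y2 _ le_y]; first by rewrite norm2_0.
by rewrite (le_trans (norm2D _ _)) // lerD2l.
Qed.

Lemma sqr_norm2B_le u v : norm2 (u - v) ^+ 2 <= 2 * norm2 u ^+ 2 + 2 * norm2 v ^+ 2.
Proof.
have := sqr_norm2DZ u v (-1); have := sqr_norm2DZ u v 1.
rewrite scale1r scaleN1r; have := sqr_ge0 (norm2 (u + v)).
lra.
Qed.

End Euclidean.

Lemma sqr_sum_le (R : realFieldType) (I : Type) (s : seq I) (a : I -> R) :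
  (\sum_(i <- s) a i) ^+ 2 <= (size s)%:R * \sum_(i <- s) a i ^+ 2.
Proof.
elim: s => [|x s IH]; first by rewrite !big_nil expr0n mul0r.
have [/size0nil->|s_gt0] := posnP (size s).
  by rewrite !big_seq1 mul1r.
rewrite !big_cons [size _]/= -natr1.
move: IH; set S := \sum_(i <- s) a i; set Q := \sum_(i <- s) a i ^+ 2 => IH.
have N_gt0 : 0 < (size s)%:R :> R by rewrite ltr0n.
have Q_ge0 : 0 <= Q by rewrite sumr_ge0 // => i _; rewrite sqr_ge0.
have := sqr_ge0 ((size s)%:R * a x - S).
nra.
Qed.

Lemma mulr_le1_of_le_div (R : realFieldType) (a b : R) :
  0 <= a -> b <= 1 / a -> b * a <= 1.
Proof.
rewrite le_eqVlt => /predU1P[<- _|a_gt0]; first by rewrite mulr0 ler01.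
by rewrite ler_pdivlMr.
Qed.

Lemma le_cvg_at_right_affine (R : realType) (g : R -> R) (D C b : R) :
  g t @[t --> 0^'+] --> D -> (forall t, 0 < t <= 1 -> g t <= C + b * t) ->
  D <= C.
Proof.
move=> g_D g_le.
have affine_C : C + b * t @[t --> 0^'+] --> C + b * 0.
  apply: cvgD; first exact: cvg_cst.
  by apply: cvgMr; apply: cvg_at_right_filter; exact: cvg_id.
rewrite mulr0 addr0 in affine_C.
apply: (ler_cvg_to g_D affine_C); near=> t; apply: g_le.
apply/andP; split; near: t; first exact: nbhs_right_gt.
by apply: nbhs_right_le; exact: ltr01.
Unshelve. all: by end_near.
Qed.

Section ConvexAnalysis.
Variables (R : realType) (n : nat).
Local Notation V := 'rV[R]_n.

Lemma has_gradient_is_derive (g : V -> R) gr z v :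
  has_gradient g gr -> is_derive z v g (dotv (gr z) v).
Proof.
by move=> /(_ z) [dg dgE]; apply: DeriveDef; [exact: diff_derivable | rewrite deriveE].
Qed.

Lemma is_derive_avg m (fi : 'I_m -> V -> R) gfi z v :
  (forall i, has_gradient (fi i) (gfi i)) ->
  is_derive z v (fun y => m%:R^-1 * \sum_(i < m) fi i y)
    (dotv (m%:R^-1 *: \sum_(i < m) gfi i z) v).
Proof.
move=> fi_grad.
have -> : (fun y => m%:R^-1 * \sum_(i < m) fi i y) = m%:R^-1 \*: \sum_(i < m) fi i.
  by apply/funext => y; rewrite /= fct_sumE.
rewrite dotvZl dotv_suml; apply: is_deriveZ; apply: is_derive_sum => i.
exact: has_gradient_is_derive.
Qed.

Lemma strongly_convex_gradient_ineq (g : V -> R) mu z u D :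
  strongly_convex mu g -> is_derive z (u - z) g D ->
  g z + D + mu / 2 * norm2 (u - z) ^+ 2 <= g u.
Proof.
move=> g_sc g_D; set v := u - z.
have uE : u = z + v by rewrite /v addrC subrK.
suff : D <= g u - g z - mu / 2 * norm2 v ^+ 2 by lra.
have quot_D : (fun t => t^-1 *: ((g \o shift z) (t *: v) - g z)) @ 0^'+ --> D.
  have <- : 'D_v g z = D by exact: derive_val.
  by apply: cvg_dnbhs_at_right; exact: ex_derive.
apply: (le_cvg_at_right_affine (b := mu / 2 * norm2 v ^+ 2) quot_D).
move=> t /andP[t0 t1].
have t01 : 0 <= t <= 1 by rewrite ltW.
have segE : t *: u + (1 - t) *: z = z + t *: v.
  by rewrite /v scalerBl scale1r scalerBr addrCA.
have := sqr_norm2DZ z v 1; rewrite scale1r -uE => normu.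
have := g_sc u z t t01; rewrite /= segE sqr_norm2DZ normu => sc_t.
rewrite (addrC (t *: v)) ler_pdivrMl //; lra.
Qed.

End ConvexAnalysis.

Section Prox.
Variables (R : realType) (n : nat).
Local Notation V := 'rV[R]_n.

Lemma minimizer_fin_num (g : V -> R) (h : V -> \bar R) z :
  proper_fun h -> is_minimizer (fun x => ((g x)%:E + h x)%E) z -> h z \is a fin_num.
Proof.
move=> [hN [x0 hx0]] z_min; rewrite fin_numE hN /=; apply/negP => /eqP hz.
have := z_min x0; rewrite hz addey // leye_eq.
by move: hx0 (hN x0); case: (h x0).
Qed.

Lemma proper_funZ (r : V -> \bar R) c :
  0 < c -> proper_fun r -> proper_fun (fun x => (c%:E * r x)%E).
Proof.
move=> c_gt0 [rN [x0 rx0]]; split => [x|]; last exists x0.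
  by move: (rN x); case: (r x) => // _; rewrite mulry gtr0_sg // mul1e.
by move: rx0 (rN x0); case: (r x0) => // [s|] _ _; rewrite ?mulrNy gtr0_sg // mul1e.
Qed.

Variables (r : V -> \bar R) (eta : R).
Hypotheses (eta_gt0 : 0 < eta) (r_proper : proper_fun r) (r_convex : convex_efun r).

Lemma prox_fin_num y z : is_prox r eta y z -> r z \is a fin_num.
Proof.
move=> /(minimizer_fin_num (proper_funZ eta_gt0 r_proper)) eta_rz.
have -> : r z = ((eta^-1)%:E * (eta%:E * r z))%E.
  by rewrite muleA -EFinM mulVf ?gt_eqF // mul1e.
by rewrite fin_numM.
Qed.

Lemma prox_subgradient_ineq y z u : is_prox r eta y z -> r u \is a fin_num ->
  fine (r z) + dotv (eta^-1 *: (y - z)) (u - z) <= fine (r u).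
Proof.
move=> z_prox u_fin; have z_fin := prox_fin_num z_prox; set v := u - z.
suff key : eta * (fine (r z) - fine (r u)) <= dotv (z - y) v.
  rewrite dotvZl -(ler_pM2l eta_gt0) mulrDr mulrA mulfV ?gt_eqF // mul1r.
  by move: key; rewrite !dotvBl; lra.
(* Compare z with the point of the segment [z, u] at parameter t, then t -> 0+. *)
apply: (le_cvg_at_right_affine (b := 1 / 2 * norm2 v ^+ 2) (cvg_cst _)).
move=> t /andP[t0 t1]; set w := t *: u + (1 - t) *: z.
have rw_le : (r w <= (t * fine (r u) + (1 - t) * fine (r z))%:E)%E.
  have t01 : 0 <= t <= 1 by rewrite ltW.
  have := r_convex u z t01.
  by rewrite -(fineK u_fin) -(fineK z_fin) -!EFinM -EFinD.
have w_fin : r w \is a fin_num.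
  rewrite fin_numE r_proper.1 /=; apply: contraTneq rw_le => ->.
  by rewrite leye_eq.
rewrite -(fineK w_fin) lee_fin in rw_le.
have z_min := z_prox w.
rewrite /= -(fineK z_fin) -(fineK w_fin) -!EFinM -!EFinD lee_fin in z_min.
have wE : w - y = (z - y) + t *: v.
  by rewrite /w /v scalerBl scale1r scalerBr addrCA addrAC.
rewrite wE sqr_norm2DZ in z_min.
have eta_rw := ler_wpM2l (ltW eta_gt0) rw_le.
rewrite -(ler_pM2l t0); lra.
Qed.

Lemma prox_gap_le (g : V -> R) mu gr y z u :
  0 < mu -> strongly_convex mu g -> is_derive z (u - z) g (dotv gr (u - z)) ->
  is_prox r eta y z -> r u \is a fin_num ->
  g z + fine (r z) - (g u + fine (r u)) <=
    norm2 (gr + eta^-1 *: (y - z)) ^+ 2 / (2 * mu).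
Proof.
move=> mu_gt0 g_sc g_D z_prox u_fin.
set v := u - z; set e := gr + eta^-1 *: (y - z).
have g_le := strongly_convex_gradient_ineq g_sc g_D.
have r_le := prox_subgradient_ineq z_prox u_fin.
have gap_le : g z + fine (r z) - (g u + fine (r u)) <=
    - dotv e v - mu / 2 * norm2 v ^+ 2.
  by rewrite dotvDl; lra.
have := ler_wpM2l (ltW mu_gt0) gap_le.
have := sqr_norm2DZ e v mu; have := sqr_ge0 (norm2 (e + mu *: v)).
rewrite ler_pdivlMr ?mulr_gt0 //; lra.
Qed.

End Prox.

Lemma norm2_sub_le_path (R : realType) n (x : nat -> 'rV[R]_n) a b c :
  (a <= b <= c)%N -> norm2 (x c - x b) <= \sum_(a <= j < c) norm2 (x j.+1 - x j).
Proof.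
move=> /andP[ab bc]; rewrite -telescope_sumr // (le_trans (norm2_sum _ _ _)) //.
rewrite [X in _ <= X](@big_cat_nat _ _ _ b) //= lerDr.
by rewrite sumr_ge0 // => j _; exact: norm2_ge0.
Qed.

Section DelayedGradient.
Variables (R : realType) (m n : nat) (gfi : 'I_m -> 'rV[R]_n -> 'rV[R]_n).
Variable Li : 'I_m -> R.
Hypotheses (Li_ge0 : forall i, 0 <= Li i)
  (gfi_lip : forall i x y, norm2 (gfi i x - gfi i y) <= Li i * norm2 (x - y)).
Variables (K : nat) (eta : R) (x : nat -> 'rV[R]_n) (tau : 'I_m -> nat -> nat).
Hypotheses (eta_gt0 : 0 < eta) (tau_bound : forall i k, (k - K <= tau i k <= k)%N).

Local Notation L := (m%:R^-1 * \sum_(i < m) Li i).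
Local Notation grad y := (m%:R^-1 *: \sum_(i < m) gfi i y).
Local Notation G k := (m%:R^-1 *: \sum_(i < m) gfi i (x (tau i k))).
Local Notation d j := (eta^-1 *: (x j.+1 - x j)).

Lemma avg_Li_ge0 : 0 <= L.
Proof. by rewrite mulr_ge0 ?invr_ge0 ?ler0n ?sumr_ge0. Qed.

Lemma norm2_grad_sub_delayed k :
  norm2 (grad (x k.+1) - G k) <= eta * L * \sum_(k - K <= j < k.+1) norm2 (d j).
Proof.
have step j : norm2 (x j.+1 - x j) = eta * norm2 (d j).
  by rewrite norm2Z gtr0_norm ?invr_gt0 // mulrA mulfV ?gt_eqF // mul1r.
rewrite -scalerBr -sumrB norm2Z ger0_norm ?invr_ge0 ?ler0n // mulrCA -!mulrA.
rewrite ler_wpM2l ?invr_ge0 ?ler0n // (le_trans (norm2_sum _ _ _)) //.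
rewrite mulr_suml mulr_sumr; apply: ler_sum => i _.
rewrite (le_trans (gfi_lip _ _ _)) // mulrCA ler_wpM2l //.
rewrite mulr_sumr -(eq_bigr _ (fun j _ => step j)).
have /andP[lo hi] := tau_bound i k.
by apply: norm2_sub_le_path; rewrite lo leqW.
Qed.

Hypothesis eta_L : eta * L * (K%:R + 1) <= 1.

Lemma sqr_norm2_grad_sub_delayed k :
  norm2 (grad (x k.+1) - G k) ^+ 2 <=
    eta * L * \sum_(k - K <= j < k) norm2 (d j) ^+ 2 + norm2 (d k) ^+ 2.
Proof.
set Q := \sum_(k - K <= j < k) _; set p := norm2 (d k) ^+ 2.
have Q_ge0 : 0 <= Q by rewrite sumr_ge0 // => j _; rewrite sqr_ge0.
have p_ge0 : 0 <= p by rewrite sqr_ge0.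
have etaL_ge0 : 0 <= eta * L by rewrite mulr_ge0 ?avg_Li_ge0 ?ltW.
have := norm2_grad_sub_delayed k; set S := \sum_(_ <= j < _) _ => A_le.
have S_le : S ^+ 2 <= (K%:R + 1) * (Q + p).
  rewrite (le_trans (sqr_sum_le _ _)) // size_iota big_nat_recr ?leq_subr //=.
  rewrite ler_wpM2r ?addr_ge0 // natr1 ler_nat leq_subLR addnS ltnS.
  by rewrite addnC -leq_subLR.
have A_sqr : norm2 (grad (x k.+1) - G k) ^+ 2 <= (eta * L) ^+ 2 * S ^+ 2.
  rewrite -exprMn; apply: lerXn2r; rewrite ?nnegrE ?norm2_ge0 //.
  by rewrite mulr_ge0 // sumr_ge0 // => j _; exact: norm2_ge0.
have etaL_le1 : eta * L <= 1.
  by have := mulr_ge0 etaL_ge0 (ler0n R K); move: eta_L; rewrite mulrDr mulr1; lra.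
have := ler_wpM2l (sqr_ge0 (eta * L)) S_le.
have := ler_wpM2r (mulr_ge0 etaL_ge0 (addr_ge0 Q_ge0 p_ge0)) eta_L.
have := ler_wpM2r p_ge0 etaL_le1.
lra.
Qed.

End DelayedGradient.

Theorem lemma3 (R : realType) (m n : nat) (hm : (0 < m)%N) (hn : (0 < n)%N)
  (fi : 'I_m -> 'rV[R]_n -> R) (gfi : 'I_m -> 'rV[R]_n -> 'rV[R]_n)
  (Li : 'I_m -> R)
  (hgrad : forall i, has_gradient (fi i) (gfi i))
  (hLi0 : forall i, 0 <= Li i)
  (hLip : forall i x y, norm2 (gfi i x - gfi i y) <= Li i * norm2 (x - y))
  (mu : R) (hmu : 0 < mu)
  (hstrong : strongly_convex mu (fun x => m%:R^-1 * \sum_(i < m) fi i x))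
  (r : 'rV[R]_n -> \bar R)
  (hproper : proper_fun r) (hclosed : closed_fun r) (hconv : convex_efun r)
  (xstar : 'rV[R]_n)
  (hxstar : is_minimizer
     (fun x => ((m%:R^-1 * \sum_(i < m) fi i x)%:E + r x)%E) xstar)
  (K : nat) (eta : R)
  (heta0 : 0 < eta)
  (heta : eta <= 1 / ((m%:R^-1 * \sum_(i < m) Li i) * (K%:R + 1)))
  (x : nat -> 'rV[R]_n) (tau : 'I_m -> nat -> nat)
  (htau : forall i k, (k - K <= tau i k <= k)%N)
  (hiter : forall k, is_prox r eta
     (x k - eta *: (m%:R^-1 *: \sum_(i < m) gfi i (x (tau i k))))
     (x k.+1))
  (k : nat) :
  let f := fun y => m%:R^-1 * \sum_(i < m) fi i y in
  let L := m%:R^-1 * \sum_(i < m) Li i in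
  let F := fun y => ((f y)%:E + r y)%E in
  let d := fun j => eta^-1 *: (x j.+1 - x j) in
  ((- norm2 (d k) ^+ 2)%:E <=
     (- (mu / 4))%:E * (F (x k.+1) - F xstar) +
     (eta * L * \sum_(k - K <= j < k) norm2 (d j) ^+ 2)%:E)%E.
Proof.
cbv zeta; set z := x k.+1; set L := m%:R^-1 * \sum_(i < m) Li i.
set G := m%:R^-1 *: \sum_(i < m) gfi i (x (tau i k)).
set gr := m%:R^-1 *: \sum_(i < m) gfi i z.
set d := eta^-1 *: (z - x k).
have z_fin := prox_fin_num heta0 hproper (hiter k).
have u_fin := minimizer_fin_num hproper hxstar.
have gap := prox_gap_le heta0 hproper hconv hmu hstrong
  (is_derive_avg _ (xstar - z) hgrad) (hiter k) u_fin.
have L_ge0 : 0 <= L := avg_Li_ge0 hLi0.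
have etaL : eta * L * (K%:R + 1) <= 1.
  by rewrite -mulrA mulr_le1_of_le_div // mulr_ge0 ?addr_ge0.
have err := sqr_norm2_grad_sub_delayed hLi0 hLip x heta0 htau etaL k.
have eE : gr + eta^-1 *: (x k - eta *: G - z) = (gr - G) - d.
  rewrite /d addrAC scalerBr scalerA mulVf ?gt_eqF // scale1r.
  by rewrite -(opprB (x k) z) scalerN opprK addrA addrAC.
rewrite -/gr eE in gap.
have par := sqr_norm2B_le (gr - G) d.
have Q_ge0 : 0 <= eta * L * \sum_(k - K <= j < k) norm2 (eta^-1 *: (x j.+1 - x j)) ^+ 2.
  by rewrite mulr_ge0 ?(mulr_ge0 (ltW heta0)) ?sumr_ge0 // => j _; rewrite sqr_ge0.
rewrite ler_pdivlMr ?mulr_gt0 // in gap.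
rewrite -(fineK z_fin) -(fineK u_fin) -!EFinD lee_fin -/z.
rewrite -/z -/L -/G -/gr -/d in err.
have := sqr_ge0 (norm2 d).
lra.
Qed.
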